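(* Let $\mathbb{F}$ be a field, $\sigma$ an $\mathbb{F}$-algebra endomorphism of the polynomial algebra $\mathbb{F}[y]$, $\delta$ a $\sigma$-derivation of $\mathbb{F}[y]$, and $A=\mathbb{F}[y][x;\sigma,\delta]$ the Ore extension. Then the following are equivalent: (i) $\operatorname{GKdim}(A)=2$; (ii) $\operatorname{GKdim}(A)<\infty$; (iii) $\deg(\sigma(y))\le 1$; (iv) $\sigma$ is locally algebraic.
   Context: A $\sigma$-derivation of an algebra $B$ is an $\mathbb{F}$-linear map $\delta:B\to B$ with $\delta(ab)=\sigma(a)\delta(b)+\delta(a)b$. The Ore extension $B[x;\sigma,\delta]$ is the free left $B$-module $\bigoplus_{i\ge0}Bx^i$ with multiplication determined by $xa=\sigma(a)x+\delta(a)$ for $a\in B$. An endomorphism $\sigma$ of $B$ is locally algebraic if every finite-dimensional subspace of $B$ containing $1$ is contained in a finite-dimensional subspace $U$ with $\sigma(U)\subseteq U$. $\operatorname{GKdim}$ is Gelfand–Kirillov dimension. *)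

From HB Require Import structures.
From mathcomp Require Import Rstruct.
From mathcomp Require Import all_boot all_order all_algebra.
From mathcomp Require Import boolp classical_sets reals ereal exp sequences.
Set Implicit Arguments. Unset Strict Implicit. Unset Printing Implicit Defensive.
Import Order.TTheory GRing.Theory Num.Theory.
Local Open Scope ring_scope.

Section LinAlg.
Variables (F : fieldType) (V : zmodType) (scale : F -> V -> V).

Definition inspan (s : seq V) (v : V) : Prop :=
  exists c : 'I_(size s) -> F, v = \sum_(i < size s) scale (c i) s`_i.

Definition lin_indep (s : seq V) : Prop :=
  forall c : 'I_(size s) -> F,
    \sum_(i < size s) scale (c i) s`_i = 0 -> forall i, c i = 0.

(* dimension of span t = maximal size of a linearly independent family in span t
   (this is at most size t) *)
Definition spandim (t : seq V) : nat :=
  \max_(k < (size t).+1 |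
        `[< exists s : seq V, size s = k /\ lin_indep s /\
                              forall i : 'I_(size s), inspan t s`_i >]) k.
End LinAlg.

Definition inspanB (F : fieldType) := @inspan F {poly F} *:%R.

(* sigma is locally algebraic: every finite-dimensional subspace W (W = span s)
   containing 1 is contained in a finite-dimensional sigma-stable subspace U = span u *)
Definition locally_algebraic (F : fieldType) (sigma : {poly F} -> {poly F}) : Prop :=
  forall s : seq {poly F}, inspanB s 1 ->
    exists u : seq {poly F},
      (forall v, inspanB s v -> inspanB u v) /\
      (forall v, inspanB u v -> inspanB u (sigma v)).

(* ---------- the Ore extension A = F[y][x; sigma, delta] ----------
   As a left B-module A is free with basis 1, x, x^2, ...; we represent
   sum_i a_i x^i by the polynomial sum_i a_i X^i in {poly {poly F}}. *)
Section Ore.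
Variables (F : fieldType) (sigma delta : {poly F} -> {poly F}).

(* left multiplication by x:  x (sum_j b_j x^j) = sum_j (sigma b_j x^(j+1) + delta b_j x^j) *)
Definition ore_xmul (q : {poly {poly F}}) : {poly {poly F}} :=
  \sum_(j < size q) ((sigma q`_j)%:P * 'X^(j.+1) + (delta q`_j)%:P * 'X^j).

Definition ore_mul (p q : {poly {poly F}}) : {poly {poly F}} :=
  \sum_(i < size p) p`_i *: iter i ore_xmul q.

Definition ore_scale (c : F) (p : {poly {poly F}}) : {poly {poly F}} := c%:P *: p.

Definition inspanA := @inspan F {poly {poly F}} ore_scale.

Fixpoint ore_words (s : seq {poly {poly F}}) (n : nat) : seq {poly {poly F}} :=
  if n is n'.+1 then [seq ore_mul a w | a <- s, w <- ore_words s n'] else [:: 1].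

(* dim_F (V^n) where V = span s; V^n is spanned by the n-fold products *)
Definition ore_powdim (s : seq {poly {poly F}}) (n : nat) : nat :=
  spandim ore_scale (ore_words s n).

Local Open Scope ereal_scope.
Definition ore_gk_sub (s : seq {poly {poly F}}) : \bar Rdefinitions.R :=
  limn_esup (fun n => ((ln ((ore_powdim s n)%:R : Rdefinitions.R) / ln (n%:R : Rdefinitions.R))%R)%:E).

Definition ore_GKdim : \bar Rdefinitions.R :=
  ereal_sup [set ore_gk_sub s | s in [set s | inspanA s 1]].
End Ore.

From HB Require Import structures.
From mathcomp Require Import Rstruct.
From mathcomp Require Import all_boot all_order all_algebra.
From mathcomp Require Import boolp classical_sets reals ereal exp sequences.
From mathcomp Require Import topology normedtype.
From mathcomp Require Import zify lra.
Import Order.TTheory GRing.Theory Num.Theory.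
Set Implicit Arguments. Unset Strict Implicit. Unset Printing Implicit Defensive.
Local Open Scope ring_scope.

(* If deg σ(y) <= 1, then σ does not increase y-degrees and δ increases them by
   a bounded amount, so a product of n elements of a finite-dimensional V has x-degree and
   coefficientwise y-degree O(n): dim V^n = O(n^2).  For V = span(1, x, y) the
   monomials y^i x^j with i, j < n/2 lie in V^n, so dim V^n >= (n/2)^2, and
   GKdim A = 2.  If d = deg σ(y) >= 2, the 2^m words y^(b_1) x ... y^(b_m) x with
   b_i in {0, 1} have leading coefficients of pairwise distinct y-degrees, namely
   1 + the base-d number with digits b_i, so dim V^(2m) >= 2^m and GKdim A = +oo.
   Finally σ is locally algebraic iff deg σ(y) <= 1: σ then preserves polynomials
   of bounded degree, while for d >= 2 the degrees d^k of σ^k(y) are unbounded. *)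

Section Span.
Variables (F : fieldType) (V : zmodType) (scale : F -> V -> V).
Implicit Types (s t : seq V) (v : V).

Lemma inspan_ind (P : V -> Prop) t :
  P 0 -> (forall u v, P u -> P v -> P (u + v)) ->
  (forall c (i : 'I_(size t)), P (scale c t`_i)) ->
  forall v, inspan scale t v -> P v.
Proof.
move=> P0 PD PZ v [c ->].
by elim/big_rec: _ => [|i w _ Pw]; [exact: P0 | apply: PD].
Qed.

Lemma spandim_le t N :
  (forall s, lin_indep scale s -> (forall i : 'I_(size s), inspan scale t s`_i) ->
     (size s <= N)%N) ->
  (spandim scale t <= N)%N.
Proof. by move=> h; apply/bigmax_leqP => k /asboolP [s [<- [/h si /si]]]. Qed.

Hypotheses (scale1 : forall v, scale 1 v = v) (scale0 : forall v, scale 0 v = 0).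

Lemma inspan_mem t v : v \in t -> inspan scale t v.
Proof.
move=> vt; have ti : (index v t < size t)%N by rewrite index_mem.
exists (fun i => if i == Ordinal ti then 1 else 0).
rewrite (bigD1 (Ordinal ti)) //= eqxx scale1 nth_index // big1 ?addr0 //.
by move=> i /negbTE ->; rewrite scale0.
Qed.

Lemma spandim_ge s t : uniq s -> lin_indep scale s -> {subset s <= t} ->
  (size s <= spandim scale t)%N.
Proof.
move=> us si st; have lt_s : (size s < (size t).+1)%N by rewrite ltnS uniq_leq_size.
apply: (@leq_bigmax_cond _ _ (fun k : 'I_(size t).+1 => nat_of_ord k) (Ordinal lt_s)).
apply/asboolP; exists s; split=> //; split=> // i.
by apply/inspan_mem/st/mem_nth.
Qed.

End Span.

Section PolynomialSpan.
Variable F : fieldType.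
Implicit Types (s : seq {poly F}) (v : {poly F}).

Lemma inspanB_size s v : inspanB s v -> (size v <= \max_(p <- s) size p)%N.
Proof.
move: v; apply: (inspan_ind (P := fun v => size v <= \max_(p <- s) size p)%N).
- by rewrite size_poly0.
- by move=> u w ? ?; apply: leq_trans (size_polyD _ _) _; rewrite geq_max; apply/andP.
move=> c i; apply: leq_trans (size_scale_leq _ _) _.
by rewrite (big_nth 0) big_mkord (bigD1 i) //= leq_maxl.
Qed.

Lemma inspanB_mem s v : v \in s -> inspanB s v.
Proof. by apply: inspan_mem => w; rewrite ?scale1r ?scale0r. Qed.

Definition monomials_below D : seq {poly F} := [seq 'X^i | i <- iota 0 D].

Lemma inspanB_monomials_below D v : inspanB (monomials_below D) v <-> (size v <= D)%N.
Proof.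
split=> [/inspanB_size vs|vD].
  apply: leq_trans vs _; apply/bigmax_leqP_seq => _ /mapP[i + ->] _.
  by rewrite size_polyXn mem_iota.
exists (fun i => v`_i); rewrite /monomials_below size_map size_iota.
rewrite (eq_bigr (fun i : 'I_D => v`_i *: 'X^i)) -?poly_def; last first.
  by move=> i _; rewrite (nth_map 0%N) ?size_iota // nth_iota.
apply/polyP => k; rewrite coef_poly; case: ltnP => // Dk.
by rewrite nth_default // (leq_trans vD Dk).
Qed.

End PolynomialSpan.

Lemma ore_scale1 (F : fieldType) (p : {poly {poly F}}) : ore_scale 1 p = p.
Proof. by rewrite /ore_scale scale1r. Qed.

Lemma ore_scale0 (F : fieldType) (p : {poly {poly F}}) : ore_scale 0 p = 0.
Proof. by rewrite /ore_scale scale0r. Qed.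

Lemma inspanA_mem (F : fieldType) (s : seq {poly {poly F}}) v : v \in s -> inspanA s v.
Proof. exact: (@inspan_mem F _ (@ore_scale F) (@ore_scale1 F) (@ore_scale0 F) s v). Qed.

(* [box a b p]: p has x-degree < a and every coefficient has y-degree < b. *)
Definition box (F : fieldType) (a b : nat) (p : {poly {poly F}}) :=
  (size p <= a)%N /\ forall i, leq (size p`_i) b.

Section Box.
Variable F : fieldType.
Implicit Types p q : {poly {poly F}}.

Lemma box_mono a a' b b' p : (a <= a')%N -> (b <= b')%N -> box a b p -> box a' b' p.
Proof. by move=> aa' bb' [pa pb]; split=> [|i]; [|move: (pb i)]; lia. Qed.

Lemma box1 : box 1 1 (1 : {poly {poly F}}).
Proof. by split=> [|i]; rewrite ?size_poly1 // coef1; case: (i == 0)%N; rewrite ?size_poly1 ?size_poly0. Qed.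

Lemma box0 a b : box a b (0 : {poly {poly F}}).
Proof. by split=> [|i]; rewrite ?coef0 size_poly0. Qed.

Lemma boxD a b p q : box a b p -> box a b q -> box a b (p + q).
Proof.
move=> [pa pb] [qa qb]; split.
  by apply: leq_trans (size_polyD _ _) _; rewrite geq_max pa qa.
by move=> i; rewrite coefD; apply: leq_trans (size_polyD _ _) _; rewrite geq_max pb qb.
Qed.

Lemma box_sum a b (I : Type) (r : seq I) (P : pred I) (f : I -> {poly {poly F}}) :
  (forall i, P i -> box a b (f i)) -> box a b (\sum_(i <- r | P i) f i).
Proof.
by move=> fab; elim/big_rec: _ => [|i q Pi]; [exact: box0 | apply/boxD/fab].
Qed.

Lemma boxZ a b (c : {poly F}) p : box a b p -> box a (size c + b)%N (c *: p).
Proof.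
move=> [pa pb]; split; first exact: leq_trans (size_scale_leq _ _) pa.
move=> i; rewrite coefZ; apply: leq_trans (size_polyMleq _ _) _.
by move: (pb i); lia.
Qed.

Lemma box_scale a b (c : F) p : box a b p -> box a b (ore_scale c p).
Proof.
move=> [pa pb]; split; first exact: leq_trans (size_scale_leq _ _) pa.
by move=> i; rewrite coefZ mul_polyC; apply: leq_trans (size_scale_leq _ _) _.
Qed.

Lemma box_span a b t v : (forall i : 'I_(size t), box a b t`_i) ->
  inspan (@ore_scale F) t v -> box a b v.
Proof.
move=> tab; apply: inspan_ind => [|u w|c i]; [exact: box0 | exact: boxD |].
exact/box_scale/tab.
Qed.

Lemma exists_box (s : seq {poly {poly F}}) : exists a b, forall p, p \in s -> box a b p.
Proof.
elim: s => [|p s [a [b sab]]]; first by exists 0%N, 0%N.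
pose bp := \max_(i < size p) size (nth 0%R p i).
have pbox : box (size p) bp p.
  split=> // i; have [ip|pi] := ltnP i (size p); last by rewrite nth_default ?size_poly0.
  exact: (@leq_bigmax_cond _ xpredT (fun i : 'I_(size p) => size p`_i) (Ordinal ip)).
exists (maxn (size p) a), (maxn bp b) => q; rewrite inE => /orP[/eqP ->|qs].
  by apply: box_mono pbox; rewrite ?leq_maxl.
by apply: box_mono (sab _ qs); rewrite ?leq_maxr.
Qed.

Lemma lin_indep_box_size a b (s : seq {poly {poly F}}) :
  lin_indep (@ore_scale F) s -> (forall i : 'I_(size s), box a b s`_i) ->
  (size s <= a * b)%N.
Proof.
move=> s_indep sab.
pose M : 'M[F]_(size s, a * b) :=
  \matrix_(i, j) mxvec (\matrix_(k < a, l < b) ((s`_i)`_k)`_l) 0 j.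
suff : row_free M by move/eqP => <-; exact: rank_leq_col.
rewrite -kermx_eq0; apply/eqP/row_matrixP => i; rewrite row0.
set v := row i _; have : v *m M = 0 by rewrite -row_mul mulmx_ker row0.
move=> vM; apply/rowP => j; rewrite [RHS]mxE; apply: (s_indep (v 0)).
apply/polyP => k; apply/polyP => l; rewrite !coef0 !coef_sum.
under eq_bigr => m _ do rewrite /ore_scale coefZ mul_polyC coefZ.
have [ka|ak] := ltnP k a; last first.
  rewrite big1 // => m _; have [sa _] := sab m.
  by rewrite (nth_default 0 (leq_trans sa ak)) coef0 mulr0.
have [lb|bl] := ltnP l b; last first.
  rewrite big1 // => m _; have [_ sb] := sab m.
  by rewrite (nth_default 0 (leq_trans (sb k) bl)) mulr0.
have := congr1 (fun w : 'rV_(a * b) => w 0 (mxvec_index (Ordinal ka) (Ordinal lb))) vM.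
rewrite /= !mxE => vM0; rewrite -[RHS]vM0; apply: eq_bigr => m _.
by rewrite /M !mxE mxvecE mxE.
Qed.

(* Orders elements by x-degree, then by the y-degree of the leading coefficient;
   [B] must bound the sizes of the leading coefficients. *)
Definition lead_key (B : nat) (p : {poly {poly F}}) := (size p * B + size (lead_coef p))%N.

Lemma lin_indep_lead_keys (s : seq {poly {poly F}}) (B : nat) :
  (forall p, p \in s -> p != 0) ->
  (forall p, p \in s -> size (lead_coef p) < B)%N ->
  uniq [seq lead_key B p | p <- s] ->
  lin_indep (@ore_scale F) s.
Proof.
move=> s_neq0 sB keys_uniq c csum i; apply/eqP/negPn/negP => ci.
pose A := [pred j : 'I_(size s) | c j != 0].
have A_gt0 : (0 < #|A|)%N by apply/card_gt0P; exists i.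
have [i0 ci0 i0max] := eq_bigmax_cond (fun j : 'I_(size s) => lead_key B s`_j) A_gt0.
have s_mem (j : 'I_(size s)) : s`_j \in s by exact: mem_nth.
have key_lt j : c j != 0 -> j != i0 -> (lead_key B s`_j < lead_key B s`_i0)%N.
  move=> cj ji0; rewrite ltn_neqAle; apply/andP; split.
    by rewrite -!(nth_map _ 0%N (lead_key B)) // nth_uniq ?size_map.
  by rewrite -i0max; exact: (@leq_bigmax_cond _ A (fun j => lead_key B s`_j) j).
(* Among the terms with nonzero coefficient, the one of largest key is the only
   one contributing to the coefficient of y^l x^k. *)
pose k := (size s`_i0).-1; pose l := (size (lead_coef s`_i0)).-1.
have := congr1 (fun p : {poly {poly F}} => (p`_k)`_l) csum.
rewrite /= !coef0 !coef_sum (bigD1 i0) //= big1 ?addr0; last first.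
  move=> j ji0; have [->|cj] := eqVneq (c j) 0; first by rewrite ore_scale0 !coef0.
  rewrite /ore_scale coefZ mul_polyC coefZ.
  have := key_lt j cj ji0; have := sB _ (s_mem j); have := sB _ (s_mem i0).
  rewrite /lead_key /k /l; set m := size s`_j; set n := size s`_i0.
  set bj := size (lead_coef s`_j); set bi := size (lead_coef s`_i0) => bi_lt bj_lt key.
  have [mn|nm] := ltnP m n.
    by rewrite (nth_default 0 (_ : m <= n.-1)%N) ?coef0 ?mulr0 //; lia.
  have mn : m = n by nia.
  rewrite -mn -lead_coefE (nth_default 0 (_ : bj <= bi.-1)%N) ?mulr0 //; nia.
rewrite /ore_scale coefZ mul_polyC coefZ -!lead_coefE.
move/eqP; rewrite mulf_eq0 (negbTE ci0) /= !lead_coef_eq0.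
by rewrite (negbTE (s_neq0 _ (s_mem i0))).
Qed.

End Box.

Fixpoint digits_value (d : nat) (l : seq bool) : nat :=
  if l is b :: l' then (digits_value d l' * d + b)%N else 0%N.

Section Digits.
Variables (d : nat) (d_gt1 : (1 < d)%N).

Lemma digits_value_lt l : (digits_value d l < d ^ size l)%N.
Proof.
elim: l => [|b l IHl] //=; rewrite expnS.
have := leq_b1 b; move: (digits_value d l) (d ^ size l)%N IHl => x y; nia.
Qed.

Lemma digits_value_inj l1 l2 :
  size l1 = size l2 -> digits_value d l1 = digits_value d l2 -> l1 = l2.
Proof.
have bit_lt (b : bool) : (b < d)%N by apply: leq_trans d_gt1; rewrite ltnS leq_b1.
elim: l1 l2 => [|b1 l1 IHl] [|b2 l2] //= [size12] val12.
have b12 : b1 = b2.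
  move: (congr1 (modn^~ d) val12); rewrite /= !modnMDl !modn_small //.
  by case: b1 {val12}; case: b2.
rewrite b12 in val12 *; congr (_ :: _); apply: IHl => //.
by apply/eqP; rewrite -(eqn_pmul2r (ltnW d_gt1)) -(eqn_add2r b2) val12.
Qed.

End Digits.

Definition ore_y (F : fieldType) : {poly {poly F}} := ('X : {poly F})%:P.

Definition ore_gens (F : fieldType) : seq {poly {poly F}} := [:: 1; 'X; ore_y F].

(* [ore_monomial i j] is y^i x^j. *)
Definition ore_monomial (F : fieldType) i j : {poly {poly F}} := ('X^i : {poly F}) *: 'X^j.

Section Monomials.
Variable F : fieldType.

Lemma size_ore_monomial i j : size (ore_monomial F i j) = j.+1.
Proof. by rewrite size_scale ?size_polyXn // monic_neq0 ?monicXn. Qed.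

Lemma lead_coef_ore_monomial i j : lead_coef (ore_monomial F i j) = 'X^i.
Proof. by rewrite lead_coefZ lead_coefXn mulr1. Qed.

Definition monomial_square m : seq {poly {poly F}} :=
  [seq ore_monomial F i j | i <- iota 0 m, j <- iota 0 m].

Lemma monomial_square_keys m : uniq [seq lead_key m.+1 p | p <- monomial_square m].
Proof.
rewrite map_allpairs allpairs_uniq ?iota_uniq // => -[i1 j1] [i2 j2].
move=> /allpairsP[[? ?] [/= + _ [-> ->]]] /allpairsP[[? ?] [/= + _ [-> ->]]].
rewrite /lead_key !size_ore_monomial !lead_coef_ore_monomial !size_polyXn !mem_iota /=.
move=> i1m i2m /(congr1 (fun k => (k %/ m.+1, k %% m.+1)%N)).
by rewrite !divnMDl // !modnMDl !divn_small ?modn_small // !addn0 => -[-> ->].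
Qed.

Lemma lin_indep_monomial_square m : lin_indep (@ore_scale F) (monomial_square m).
Proof.
apply: (lin_indep_lead_keys (B := m.+1)); last exact: monomial_square_keys.
  by move=> p /allpairsP[[i j] [_ _ ->]]; rewrite -size_poly_eq0 size_ore_monomial.
move=> p /allpairsP[[i j] [/= im _ ->]].
by rewrite lead_coef_ore_monomial size_polyXn ltnS; rewrite mem_iota in im.
Qed.

End Monomials.

Section PolynomialEndomorphism.
Variables (F : fieldType) (sigma : {lrmorphism {poly F} -> {poly F}}).

Lemma sigmaC c : sigma c%:P = c%:P.
Proof. by rewrite -alg_polyC linearZ /= rmorph1. Qed.

Lemma sigmaE p : sigma p = p \Po sigma 'X.
Proof.
elim/poly_ind: p => [|p c IHp]; first by rewrite raddf0 comp_poly0.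
by rewrite rmorphD rmorphM /= sigmaC comp_polyD comp_polyM comp_polyX comp_polyC IHp.
Qed.

Lemma size_sigma_le (size_sigmaX : (size (sigma 'X) <= 2)%N) p : (size (sigma p) <= size p)%N.
Proof.
rewrite sigmaE; have [->|p0] := eqVneq p 0; first by rewrite comp_poly0 size_poly0.
apply: leq_trans (size_comp_poly_leq _ _) _.
have : (0 < size p)%N by rewrite size_poly_gt0.
by move: size_sigmaX; case: (size (sigma 'X)) => [|[|[|]]] //= _; nia.
Qed.

Section Expanding.
Hypothesis size_sigmaX : (2 < size (sigma 'X))%N.

Lemma size_sigma p : p != 0 -> size (sigma p) = ((size p).-1 * (size (sigma 'X)).-1).+1.
Proof.
move=> p0; rewrite sigmaE -(size_comp_poly p (sigma 'X)) prednK // lt0n size_poly_eq0.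
rewrite -lead_coef_eq0 lead_coef_comp ?(ltn_trans _ size_sigmaX) //.
by rewrite mulf_neq0 ?expf_neq0 // lead_coef_eq0 // -size_poly_eq0; move: size_sigmaX; case: size.
Qed.

Lemma sigma_neq0 p : p != 0 -> sigma p != 0.
Proof. by move=> p0; rewrite -size_poly_eq0 size_sigma. Qed.

End Expanding.

Lemma locally_algebraicP : locally_algebraic sigma <-> (size (sigma 'X) <= 2)%N.
Proof.
split=> [sigma_la|size_sigmaX s _]; last first.
  exists (monomials_below F (\max_(p <- s) size p)); split.
    by move=> v /inspanB_size /inspanB_monomials_below.
  move=> v /inspanB_monomials_below vD; apply/inspanB_monomials_below.
  exact: leq_trans (size_sigma_le size_sigmaX v) vD.
rewrite leqNgt; apply/negP => size_sigmaX.
have [u [sub_u sigma_u]] := sigma_la [:: 1; 'X] (inspanB_mem (mem_head _ _)).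
have iter_u k : inspanB u (iter k sigma 'X).
  elim: k => [|k IHk] /=; last exact: sigma_u.
  by apply/sub_u/inspanB_mem; rewrite !inE eqxx orbT.
pose d := (size (sigma 'X)).-1.
have d_gt1 : (1 < d)%N by move: size_sigmaX; rewrite /d; case: size => // -[|[|]].
have size_iter k : size (iter k sigma 'X) = (d ^ k).+1.
  elim: k => [|k IHk] /=; first by rewrite size_polyX.
  have iter0 : iter k sigma 'X != 0 by rewrite -size_poly_eq0 IHk.
  by rewrite (size_sigma size_sigmaX iter0) IHk /= expnSr.
pose D := (\max_(p <- u) size p)%N.
have := inspanB_size (iter_u D); rewrite size_iter -/D.
by have := ltn_expl D d_gt1; lia.
Qed.

End PolynomialEndomorphism.

Section OreExtension.
Variables (F : fieldType) (sigma : {lrmorphism {poly F} -> {poly F}}).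
Variable delta : {linear {poly F} -> {poly F}}.
Hypothesis delta_mul : forall a b, delta (a * b) = sigma a * delta b + delta a * b.

Local Notation xmul := (ore_xmul sigma delta).
Local Notation omul := (ore_mul sigma delta).
Local Notation words := (ore_words sigma delta).

Lemma ore_xmulE q : xmul q = map_poly sigma q * 'X + map_poly delta q.
Proof.
rewrite /ore_xmul big_split /= /map_poly !poly_def mulr_suml.
congr (_ + _); apply: eq_bigr => i _; rewrite -!mul_polyC //.
by rewrite -mulrA -exprSr.
Qed.

Lemma delta1 : delta 1 = 0.
Proof.
have := delta_mul 1 1; rewrite !mulr1 rmorph1 mul1r => /eqP.
by rewrite -subr_eq0 opprD addrA subrr sub0r oppr_eq0 => /eqP.
Qed.

Lemma deltaC c : delta c%:P = 0.
Proof. by rewrite -alg_polyC linearZ /= delta1 scaler0. Qed.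

Lemma ore_mul1 w : omul 1 w = w.
Proof. by rewrite /ore_mul size_poly1 big_ord1 /= coef1 /= scale1r. Qed.

Lemma ore_mulX w : omul 'X w = xmul w.
Proof.
by rewrite /ore_mul size_polyX big_ord_recr big_ord1 /= !coefX /= scale0r add0r scale1r.
Qed.

Lemma ore_mul_y w : omul (ore_y F) w = 'X *: w.
Proof. by rewrite /ore_mul /ore_y size_polyC polyX_eq0 /= big_ord1 /= coefC. Qed.

Lemma ore_xmulXn j : xmul ('X^j : {poly {poly F}}) = 'X^(j.+1).
Proof.
rewrite ore_xmulE map_polyXn -exprSr -[RHS]addr0; congr (_ + _).
apply/polyP => i; rewrite coef_map coefXn coef0.
by case: (i == j); rewrite /= ?mulr1n ?delta1 ?mulr0n ?raddf0.
Qed.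

Lemma ore_words_mul s n a w : a \in s -> w \in words s n -> omul a w \in words s n.+1.
Proof. exact: allpairs_f. Qed.

Lemma ore_words_monomial n i j : (i + j <= n)%N ->
  ore_monomial F i j \in words (ore_gens F) n.
Proof.
rewrite /ore_monomial.
elim: n i j => [|n IHn] i j ijn.
  by move: ijn; rewrite leqn0 addn_eq0 => /andP[/eqP -> /eqP ->]; rewrite !expr0 scale1r inE.
case: i ijn => [|i] ijn; last first.
  rewrite exprS -scalerA -ore_mul_y ore_words_mul ?inE ?eqxx ?orbT //.
  by apply: IHn; rewrite addSn in ijn.
rewrite expr0 scale1r; case: j ijn => [|j] jn.
  by have := ore_words_mul (mem_head _ _) (IHn 0 0 isT); rewrite ore_mul1 expr0 scale1r.
rewrite -ore_xmulXn -ore_mulX ore_words_mul ?inE ?eqxx ?orbT //.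
by have := IHn 0 j jn; rewrite expr0 scale1r.
Qed.

Lemma ore_powdim_square n : (n./2 ^ 2 <= ore_powdim sigma delta (ore_gens F) n)%N.
Proof.
have sq_words : {subset monomial_square F n./2 <= words (ore_gens F) n}.
  move=> _ /allpairsP[[i j] [/= + + ->]]; rewrite !mem_iota /= !add0n => ih jh.
  apply: ore_words_monomial.
  have : ((n./2).*2 <= n)%N by rewrite -[X in (_ <= X)%N](odd_double_half n) leq_addl.
  by rewrite -addnn; lia.
have sq_uniq : uniq (monomial_square F n./2) := map_uniq (@monomial_square_keys F n./2).
have := spandim_ge (@ore_scale1 F) (@ore_scale0 F) sq_uniq
  (@lin_indep_monomial_square F n./2) sq_words.
by rewrite size_allpairs size_iota.
Qed.

Section DegreeAtMostOne.
Hypothesis size_sigmaX : (size (sigma 'X) <= 2)%N.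
Let e := size (delta 'X).

Lemma size_delta_le p : (size (delta p) <= size p + e)%N.
Proof.
elim/poly_ind: p => [|p c IHp]; first by rewrite raddf0 size_poly0.
have [->|p0] := eqVneq p 0; first by rewrite mul0r add0r deltaC size_poly0.
rewrite raddfD /= deltaC addr0 delta_mul size_MXaddC (negbTE p0) /=.
apply: leq_trans (size_polyD _ _) _; rewrite geq_max; apply/andP; split.
  apply: leq_trans (size_polyMleq _ _) _; apply: leq_trans (leq_pred _) _.
  by rewrite leq_add2r; exact/leqW/size_sigma_le.
by apply: leq_trans (size_polyMleq _ _) _; rewrite size_polyX addn2 addSn ltnS.
Qed.

Lemma box_xmul a b q : box a b q -> box a.+1 (b + e)%N (xmul q).
Proof.
move=> [qa qb]; rewrite ore_xmulE; split.
  apply: leq_trans (size_polyD _ _) _; rewrite geq_max; apply/andP; split.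
    apply: leq_trans (size_polyMleq _ _) _; rewrite size_polyX addn2 /=.
    exact: leq_trans (size_poly _ _) qa.
  exact: leq_trans (size_poly _ _) (leqW qa).
move=> i; rewrite coefD coefMX !coef_map /=.
apply: leq_trans (size_polyD _ _) _; rewrite geq_max; apply/andP; split.
  case: (i == 0)%N; first by rewrite size_poly0.
  exact: leq_trans (size_sigma_le size_sigmaX _) (leq_trans (qb _) (leq_addr _ _)).
by apply: leq_trans (size_delta_le _) _; rewrite leq_add2r.
Qed.

Lemma box_ore_mul a1 b1 a2 b2 p q : box a1 b1 p -> box a2 b2 q ->
  box (a1 + a2)%N (b1 + b2 + a1 * e)%N (omul p q).
Proof.
move=> [pa pb] qbox.
have xmul_iter i : box (a2 + i)%N (b2 + i * e)%N (iter i xmul q).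
  elim: i => [|i IHi] /=; first by rewrite addn0 mul0n addn0.
  by apply: box_mono (box_xmul IHi); rewrite ?addnS // mulSnr addnA.
apply: box_sum => -[i ip] _ /=; apply: box_mono (boxZ _ (xmul_iter i)).
  by have := leq_trans ip pa; lia.
rewrite addnA; apply: leq_add (leq_add (pb i) (leqnn _)) (leq_mul _ (leqnn _)).
exact: ltnW (leq_trans ip pa).
Qed.

Lemma box_ore_words s a b : (forall p, p \in s -> box a b p) ->
  forall n w, w \in words s n -> box (n * a + 1)%N (n * (b + a * e) + 1)%N w.
Proof.
move=> sab; elim=> [|n IHn] w /=; first by rewrite inE => /eqP ->; exact: box1.
case/allpairsP => -[p w'] [/= ps w'n ->].
have := box_ore_mul (sab _ ps) (IHn _ w'n); clear IHn.
by move=> wbox; apply: box_mono wbox; nia.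
Qed.

Lemma ore_powdim_quadratic s :
  exists C, forall n, (0 < n)%N -> (ore_powdim sigma delta s n <= (n * C) ^ 2)%N.
Proof.
have [a [b sab]] := exists_box s.
exists (a + b + a * e + 1)%N => n n_gt0.
apply: (@leq_trans ((n * a + 1) * (n * (b + a * e) + 1))%N); last by nia.
apply: spandim_le => t t_indep t_span; apply: lin_indep_box_size => // i.
apply: box_span (t_span i) => j.
by apply: (box_ore_words sab); exact: mem_nth.
Qed.

End DegreeAtMostOne.

Section DegreeAtLeastTwo.
Hypothesis size_sigmaX : (2 < size (sigma 'X))%N.
Let d := (size (sigma 'X)).-1.

Let d_gt1 : (1 < d)%N.
Proof. by rewrite /d; move: size_sigmaX; case: size => // -[|[|n]]. Qed.

Lemma ore_xmul_lead w : w != 0 ->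
  size (xmul w) = (size w).+1 /\ lead_coef (xmul w) = sigma (lead_coef w).
Proof.
move=> w0; have sigma_w : size (map_poly sigma w) = size w by rewrite size_map_poly_id0 ?(sigma_neq0 size_sigmaX) ?lead_coef_eq0.
have sigma_w0 : map_poly sigma w != 0 by rewrite -size_poly_eq0 sigma_w size_poly_eq0.
have delta_lt : (size (map_poly delta w) < size (map_poly sigma w * 'X)%R)%N.
  by rewrite size_mulX // sigma_w ltnS size_poly.
rewrite ore_xmulE size_polyDl // lead_coefDl // size_mulX // sigma_w lead_coefMX.
by rewrite lead_coef_map_id0 ?raddf0 ?(sigma_neq0 size_sigmaX) ?lead_coef_eq0.
Qed.

(* For bits b_1 ... b_m, the word y^(b_1) x y^(b_2) x ... y^(b_m) x of length 2m
   (a skipped y being replaced by the generator 1). *)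
Fixpoint bit_word (l : seq bool) : {poly {poly F}} :=
  if l is b :: l' then (if b then 'X else 1) *: xmul (bit_word l') else 1.

Lemma bit_word_lead l : size (bit_word l) = (size l).+1 /\
  size (lead_coef (bit_word l)) = (digits_value d l).+1.
Proof.
elim: l => [|b l [size_l lead_l]] /=; first by rewrite size_poly1 lead_coef1 size_poly1.
have l0 : bit_word l != 0 by rewrite -size_poly_eq0 size_l.
have [size_xl lead_xl] := ore_xmul_lead l0.
have lead0 : lead_coef (bit_word l) != 0 by rewrite lead_coef_eq0.
have b0 : (if b then 'X else 1 : {poly F}) != 0 by case: b; rewrite ?polyX_eq0 ?oner_eq0.
rewrite (size_scale _ b0) size_xl size_l lead_coefZ lead_xl; split=> //.
case: b {b0} => /=; last by rewrite mul1r addn0 (size_sigma size_sigmaX lead0) lead_l.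
by rewrite mulrC size_mulX ?(sigma_neq0 size_sigmaX) // (size_sigma size_sigmaX lead0) lead_l addn1.
Qed.

Lemma bit_word_words l : bit_word l \in words (ore_gens F) (size l).*2.
Proof.
elim: l => [|b l IHl]; first by rewrite /= inE.
rewrite [bit_word _]/= [size _]/= doubleS.
have -> : (if b then 'X else 1) *: xmul (bit_word l) =
          omul (if b then ore_y F else 1) (omul 'X (bit_word l)).
  by rewrite ore_mulX; case: b; rewrite ?ore_mul_y ?ore_mul1 ?scale1r.
by rewrite !ore_words_mul //; case: b; rewrite !inE eqxx ?orbT.
Qed.

Definition bit_words m := [seq bit_word (tval t) | t <- enum {: m.-tuple bool}].

Lemma bit_words_keys m : uniq [seq lead_key (d ^ m)%N.+1 p | p <- bit_words m].
Proof.
rewrite -map_comp map_inj_uniq ?enum_uniq // => t1 t2 /=.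
rewrite /lead_key; have [-> ->] := bit_word_lead t1; have [-> ->] := bit_word_lead t2.
rewrite !size_tuple => /eqP; rewrite eqn_add2l eqSS => /eqP val12.
by apply/val_inj/(digits_value_inj d_gt1) => //; rewrite !size_tuple.
Qed.

Lemma ore_powdim_exp m : (2 ^ m <= ore_powdim sigma delta (ore_gens F) m.*2)%N.
Proof.
have words_m : {subset bit_words m <= words (ore_gens F) m.*2}.
  by move=> _ /mapP[t _ ->]; rewrite -[m in m.*2](size_tuple t) bit_word_words.
have indep : lin_indep (@ore_scale F) (bit_words m).
  apply: (lin_indep_lead_keys (B := (d ^ m)%N.+1)); last exact: bit_words_keys.
    by move=> _ /mapP[t _ ->]; rewrite -size_poly_eq0 (bit_word_lead t).1.
  move=> _ /mapP[t _ ->]; rewrite (bit_word_lead t).2 ltnS -[m in (d ^ m)%N](size_tuple t).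
  exact: digits_value_lt.
have := spandim_ge (@ore_scale1 F) (@ore_scale0 F) (map_uniq (bit_words_keys m)) indep words_m.
by rewrite size_map -cardE card_tuple card_bool.
Qed.

End DegreeAtLeastTwo.

End OreExtension.

Section GrowthRate.
Variable R : realType.
Local Open Scope ereal_scope.

Definition growth_rate (f : nat -> nat) : \bar R :=
  limn_esup (fun n => ((ln (f n)%:R / ln n%:R)%R)%:E).

Lemma limn_esup_le_eventually (u : (\bar R)^nat) l N :
  (forall n, (N <= n)%N -> u n <= l) -> limn_esup u <= l.
Proof.
move=> uN; rewrite limn_esup_lim; apply: lime_le; first exact: is_cvg_esups.
near=> n; apply: ge_ereal_sup => _ [k /= nk <-]; apply: uN.
by apply: leq_trans nk; near: n; exists N.
Unshelve. all: by end_near. Qed.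

Lemma limn_esup_ge_eventually (u : (\bar R)^nat) l N :
  (forall n, (N <= n)%N -> l <= u n) -> l <= limn_esup u.
Proof.
move=> uN; rewrite limn_esup_lim; apply: lime_ge; first exact: is_cvg_esups.
near=> n; apply: le_trans (uN n _) _; last by apply: ereal_sup_ubound; exists n => /=.
by near: n; exists N.
Unshelve. all: by end_near. Qed.

Local Close Scope ereal_scope.

Lemma ln_nat_ge (c e : R) : 0 < e -> exists N : nat, forall n, (N <= n)%N -> c <= e * ln n%:R.
Proof.
move=> e_gt0; have [N expN] : exists N : nat, expR (c / e) < N%:R by eexists; exact: truncnS_gt.
exists N => n Nn; have expn : expR (c / e) < n%:R by apply: lt_le_trans expN _; rewrite ler_nat.
have : c / e <= ln n%:R.
  by rewrite -[X in X <= _]expRK ler_ln ?posrE ?expR_gt0 ?ltW // (lt_trans (expR_gt0 _) expn).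
by rewrite ler_pdivrMr // mulrC.
Qed.

Lemma ln_nat_gt0 n : (1 < n)%N -> 0 < ln (n%:R : R).
Proof. by move=> n_gt1; apply: ln_gt0; rewrite ltr1n. Qed.

Lemma ln_natM a b : (0 < a)%N -> (0 < b)%N -> ln ((a * b)%:R : R) = ln a%:R + ln b%:R.
Proof. by move=> a_gt0 b_gt0; rewrite natrM lnM // posrE ltr0n. Qed.

Lemma ln_natX a k : (0 < a)%N -> ln ((a ^ k)%:R : R) = ln a%:R *+ k.
Proof. by move=> a_gt0; rewrite natrX lnXn // ltr0n. Qed.

Lemma ler_ln_nat a b : (0 < a)%N -> (a <= b)%N -> ln (a%:R : R) <= ln b%:R.
Proof. by move=> a_gt0 ab; rewrite ler_ln ?posrE ?ltr0n ?ler_nat // (leq_trans a_gt0). Qed.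

Lemma growth_rate_quadratic_le (f : nat -> nat) C :
  (forall n, (0 < n)%N -> (f n <= (n * C) ^ 2)%N) -> (growth_rate f <= 2%:E)%E.
Proof.
move=> fC; apply/lee_addgt0Pr => e e_gt0.
have [N NC] := ln_nat_ge (2 * ln C.+1%:R) e_gt0.
apply: (@limn_esup_le_eventually _ _ (maxn N 2)) => n; rewrite geq_max => /andP[Nn n_gt1].
have ln_n := ln_nat_gt0 n_gt1; have n_gt0 := ltnW n_gt1.
rewrite -EFinD lee_fin ler_pdivrMr //.
have ln_C : 0 <= ln (C.+1%:R : R) by apply: ln_ge0; rewrite ler1n.
have ln_f : ln ((f n)%:R : R) <= 2 * ln n%:R + 2 * ln C.+1%:R.
  have [->|fn_gt0] := posnP (f n).
    by rewrite ln0 // addr_ge0 // mulr_ge0 // ltW.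
  apply: le_trans (ler_ln_nat fn_gt0 (leq_trans (fC n n_gt0) (_ : _ <= (n * C.+1) ^ 2)%N)) _.
    by rewrite leq_exp2r // leq_mul2l leqnSn orbT.
  by rewrite ln_natX ?muln_gt0 ?n_gt0 // ln_natM // -mulr_natl; lra.
by have := NC n Nn; rewrite mulrDl; lra.
Qed.

Lemma growth_rate_quadratic_ge (f : nat -> nat) :
  (forall n, (n./2 ^ 2 <= f n)%N) -> (2%:E <= growth_rate f)%E.
Proof.
move=> fn2; apply/lee_subgt0Pr => e e_gt0.
have [N N16] := ln_nat_ge (ln 16%:R) e_gt0.
apply: (@limn_esup_ge_eventually _ _ (maxn N 2)) => n; rewrite geq_max => /andP[Nn n_gt1].
have ln_n := ln_nat_gt0 n_gt1; have n_gt0 := ltnW n_gt1.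
rewrite -EFinB lee_fin ler_pdivlMr //.
have n2_le : (n * n <= 16 * f n)%N.
  have : (n <= (n./2).*2.+1)%N by rewrite -[X in (X <= _)%N](odd_double_half n); case: odd.
  by have := fn2 n; move: (n./2) => m; nia.
have fn_gt0 : (0 < f n)%N by move: n2_le n_gt0; move: (f n) => x; nia.
have n2_gt0 : (0 < n * n)%N by rewrite muln_gt0 n_gt0.
have := ler_ln_nat n2_gt0 n2_le; rewrite !ln_natM // => ln_f.
by have := N16 n Nn; rewrite mulrBl; lra.
Qed.

Lemma mul_succ_le_exp2 j : (j * j.+1 <= 2 * 2 ^ j)%N.
Proof. by elim: j => [|[|[|j]] IHj] //; rewrite expnS; nia. Qed.

Lemma growth_rate_exp_unbounded (f : nat -> nat) (M : R) n :
  (forall m, (2 ^ m <= f m.*2)%N) ->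
  exists2 k, (n <= k)%N & M <= ln (f k)%:R / ln k%:R.
Proof.
(* At k = 2^(j+1) the ratio is at least 2^j / (j + 1) >= j / 2. *)
move=> f2; have [J MJ] : exists J : nat, 2 * M < J%:R by eexists; exact: truncnS_gt.
pose j := maxn J n; exists (2 ^ j.+1)%N.
  apply: leq_trans (ltnW (ltn_expl _ (isT : (1 < 2)%N))).
  exact: leq_trans (leq_maxr J n) (leqnSn _).
have ln2 : 0 < ln (2%:R : R) by exact: ln_nat_gt0.
have ln_k : ln (2 ^ j.+1)%:R = ln (2%:R : R) * j.+1%:R by rewrite ln_natX // mulr_natr.
have ln_f : ln (2%:R : R) * (2 ^ j)%:R <= ln (f (2 ^ j.+1)%N)%:R.
  rewrite mulr_natr -ln_natX // ler_ln_nat ?expn_gt0 //.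
  by rewrite expnSr muln2 f2.
rewrite ln_k ler_pdivlMr ?mulr_gt0 ?ltr0n //; apply: le_trans ln_f.
have jM : 2 * M < j%:R by apply: lt_le_trans MJ _; rewrite ler_nat leq_maxl.
have j_exp : j%:R * (j%:R + 1) <= 2 * (2 ^ j)%:R :> R.
  by have := mul_succ_le_exp2 j; rewrite -(ler_nat R) !natrM natrX -addn1 natrD.
have j_ge0 : 0 <= j%:R :> R by [].
rewrite mulrCA ler_wpM2l ?ltW // -addn1 natrD; nra.
Qed.

Lemma growth_rate_exp (f : nat -> nat) :
  (forall m, (2 ^ m <= f m.*2)%N) -> growth_rate f = +oo%E.
Proof.
move=> f2; apply/eqyP => M _; rewrite /growth_rate limn_esup_lim.
apply: lime_ge; first exact: is_cvg_esups.
apply: nearW => n; have [k nk Mk] := growth_rate_exp_unbounded M n f2.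
apply: (@le_trans _ _ ((ln (f k)%:R / ln k%:R)%:E)); first by rewrite lee_fin.
by apply: ereal_sup_ubound; exists k.
Qed.

End GrowthRate.

Lemma ore_gk_subE (F : fieldType) (sigma delta : {poly F} -> {poly F}) s :
  ore_gk_sub sigma delta s = growth_rate _ (ore_powdim sigma delta s).
Proof. by []. Qed.

Theorem mainTheorem5 (F : fieldType)
  (sigma : {lrmorphism {poly F} -> {poly F}})
  (delta : {linear {poly F} -> {poly F}})
  (hdelta : forall a b : {poly F}, delta (a * b) = sigma a * delta b + delta a * b) :
  [<-> ore_GKdim sigma delta = 2%:E;
       (ore_GKdim sigma delta < +oo)%E;
       (size (sigma 'X) <= 2)%N;
       locally_algebraic sigma].
Proof.
have gens_le_GK : (ore_gk_sub sigma delta (ore_gens F) <= ore_GKdim sigma delta)%E.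
  apply: ereal_sup_ubound; exists (ore_gens F) => //.
  exact: inspanA_mem (mem_head _ _).
have GK_eq2 : (size (sigma 'X) <= 2)%N -> ore_GKdim sigma delta = 2%:E.
  move=> size_sigmaX; apply/eqP; rewrite eq_le; apply/andP; split.
    apply: ge_ereal_sup => _ [s _ <-]; rewrite ore_gk_subE.
    have [C powdimC] := ore_powdim_quadratic hdelta size_sigmaX s.
    exact: growth_rate_quadratic_le powdimC.
  apply: le_trans gens_le_GK; rewrite ore_gk_subE.
  exact/growth_rate_quadratic_ge/ore_powdim_square.
tfae.
- by move=> ->; rewrite ltey.
- move=> GK_fin; rewrite leqNgt; apply/negP => size_sigmaX.
  move: gens_le_GK; rewrite ore_gk_subE growth_rate_exp ?leye_eq.
    by move/eqP=> GK_oo; rewrite GK_oo in GK_fin.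
  exact: ore_powdim_exp.
- exact: (locally_algebraicP sigma).2.
- by move/locally_algebraicP; exact: GK_eq2.
Qed.
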